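(* Let $h$ be a $k$-ary fixed function symbol of the term language, interpreted semantically as a differentiable function $h:\mathbb{R}^k\to\mathbb{R}$. Suppose that for each $i\in\{1,\dots,k\}$ there is a term $\partial_i h$ whose free variables are among $y_1,\dots,y_k$ such that for every state $\omega$, $$\omega[\![\partial_i h]\!] = \frac{\partial h}{\partial y_i}\big(\omega(y_1),\dots,\omega(y_k)\big).$$ Then for all differential-free terms $e_1,\dots,e_k$ the equation $$(h(e_1,\dots,e_k))' = \sum_{i=1}^k \partial_i h(e_1,\dots,e_k)\cdot (e_i)'$$ is valid (true in every state), where $\partial_i h(e_1,\dots,e_k)$ denotes the term obtained from $\partial_i h$ by substituting $e_j$ for $y_j$ ($j=1,\dots,k$).
   Context: Fix a set $V$ of real-valued variables such that each variable $x$ has an associated differential variable $x'\in V$. A state is a map $\omega:V\to\mathbb{R}$. Terms are generated by $e ::= x \mid c \mid e+e \mid e\cdot e \mid h(e_1,\dots,e_k)\mid (e)'$, where $x\in V$, $c$ is a rational constant, and $h$ ranges over finitely many fixed function symbols, each $k$-ary $h$ having a fixed interpretation as a $C^\infty$ function $\mathbb{R}^k\to\mathbb{R}$ (denoted by the same letter). A term is differential-free if it contains no subterm $(e)'$ and no differential variable. The value $\omega[\![e]\!]\in\mathbb{R}$ is defined as usual ($\omega[\![x]\!]=\omega(x)$, sums and products pointwise, $\omega[\![h(e_1,\dots,e_k)]\!]=h(\omega[\![e_1]\!],\dots,\omega[\![e_k]\!])$), and the differential has value $\omega[\![(e)']\!]=\sum_{x\in V}\omega(x')\,\frac{\partial \omega[\![e]\!]}{\partial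 x}$, where $\frac{\partial \omega[\![e]\!]}{\partial x}$ is the partial derivative of the value of $e$ with respect to the value of variable $x$, evaluated at $\omega$. An equation $e=\tilde e$ is valid if $\omega[\![e]\!]=\omega[\![\tilde e]\!]$ for all states $\omega$. *)

From Stdlib Require Import Reals QArith Qreals.
From Coquelicot Require Import Coquelicot.
From mathcomp Require Import all_boot.

Set Implicit Arguments.
Unset Strict Implicit.
Unset Printing Implicit Defensive.

Section Smooth.
Variable k : nat.

Definition upd_pt (p : 'I_k -> R) (i : 'I_k) (t : R) : 'I_k -> R :=
  fun j => if j == i then t else p j.

Definition pderiv (f : ('I_k -> R) -> R) (i : 'I_k) (p : 'I_k -> R) : R :=
  Derive (fun t => f (upd_pt p i t)) (p i).

(* continuity on R^k (sup-norm, equivalently Euclidean topology) *)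
Definition contk (f : ('I_k -> R) -> R) : Prop :=
  forall p eps, Rlt 0 eps -> exists d, Rlt 0 d /\
    forall q, (forall j, Rlt (Rabs (Rminus (q j) (p j))) d) -> Rlt (Rabs (Rminus (f q) (f p))) eps.

Fixpoint Cn (n : nat) (f : ('I_k -> R) -> R) : Prop :=
  contk f /\
  match n with
  | O => True
  | S m => forall i, (forall p, ex_derive (fun t => f (upd_pt p i t)) (p i))
                     /\ Cn m (pderiv f i)
  end.

Definition smooth (f : ('I_k -> R) -> R) : Prop := forall n, Cn n f.
End Smooth.

(* A variable is a base name b together with a number n of primes:
   (b, n) stands for b'''...' (n primes).  x' := prime x. *)
Definition tvar (B : eqType) : eqType := (B * nat)%type.
Definition prime (B : eqType) (x : tvar B) : tvar B := (x.1, x.2.+1).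
Definition is_dvar (B : eqType) (x : tvar B) : bool := (0 < x.2)%N.

Section Terms.
Variables (B : eqType) (F : Type) (ar : F -> nat).

Inductive term : Type :=
| TVar (x : tvar B)
| TConst (c : Q)
| TPlus (e1 e2 : term)
| TMult (e1 e2 : term)
| TApp (f : F) (args : 'I_(ar f) -> term)
| TDiff (e : term).

Fixpoint vars (e : term) : seq (tvar B) :=
  match e with
  | TVar x => [:: x]
  | TConst _ => [::]
  | TPlus e1 e2 | TMult e1 e2 => vars e1 ++ vars e2
  | TApp f a => flatten [seq vars (a i) | i <- enum 'I_(ar f)]
  | TDiff e => vars e ++ map (@prime B) (vars e)
  end.

Fixpoint dfree (e : term) : Prop :=
  match e with
  | TVar x => ~~ is_dvar x
  | TConst _ => True
  | TPlus e1 e2 | TMult e1 e2 => dfree e1 /\ dfree e2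
  | TApp f a => forall i, dfree (a i)
  | TDiff _ => False
  end.

Definition upd (w : tvar B -> R) (x : tvar B) (t : R) : tvar B -> R :=
  fun z => if z == x then t else w z.

Variable I : forall f : F, ('I_(ar f) -> R) -> R.

(* semantics; the sum over all x in V of w(x') * d[[e]]/dx is taken over the
   (finitely many) variables occurring in e, all other summands being 0. *)
Fixpoint eval (w : tvar B -> R) (e : term) {struct e} : R :=
  match e with
  | TVar x => w x
  | TConst c => Q2R c
  | TPlus e1 e2 => Rplus (eval w e1) (eval w e2)
  | TMult e1 e2 => Rmult (eval w e1) (eval w e2)
  | TApp f a => I (fun i => eval w (a i))
  | TDiff e =>
      foldr (fun x acc =>
               Rplus (Rmult (w (prime x)) (Derive (fun t => eval (upd w x t) e) (w x))) acc)
            R0 (undup (vars e))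
  end.

Fixpoint subst (s : tvar B -> term) (e : term) : term :=
  match e with
  | TVar x => s x
  | TConst c => TConst c
  | TPlus e1 e2 => TPlus (subst s e1) (subst s e2)
  | TMult e1 e2 => TMult (subst s e1) (subst s e2)
  | TApp f a => TApp (f:=f) (fun i => subst s (a i))
  | TDiff e => TDiff (subst s e)
  end.

Definition subst_map (k : nat) (y : 'I_k -> tvar B) (es : 'I_k -> term)
  : tvar B -> term :=
  fun x => match [pick j | y j == x] with Some j => es j | None => TVar x end.

Definition tsum (ts : seq term) : term := foldr TPlus (TConst 0%Q) ts.

Definition valid (e1 e2 : term) : Prop := forall w, eval w e1 = eval w e2.
End Terms.

Arguments TApp {B F ar} f args.

From Pilot Require Import Defs.
From Stdlib Require Import Reals QArith Qreals Lra FunctionalExtensionality.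
From Coquelicot Require Import Coquelicot.
From HB Require Import structures.
From mathcomp Require Import all_boot.

(* For the chain rule, move the coordinates of g(t) from g(t0) to g(t) one at a
   time and telescope. By the mean value theorem the i-th step equals a partial
   derivative of f at an intermediate point times g_i(t) - g_i(t0); the
   intermediate point tends to g(t0), so continuity of that partial derivative
   gives the i-th summand of the chain rule. Applied to the variable x, this
   writes the x-derivative of h(e_1,...,e_k) as sum_i (d_i h)(e) * de_i/dx;
   weighting by w(x') and exchanging the two sums gives sum_i (d_i h)(e) * (e_i)',
   once the sum defining (e_i)' is extended to all variables of h(e), which is
   harmless since e_i does not depend on the extra ones. *)

Set Implicit Arguments.
Unset Strict Implicit.
Unset Printing Implicit Defensive.
Open Scope R_scope.

HB.instance Definition _ := Monoid.isComLaw.Build R R0 Rplus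
  (fun x y z => esym (Rplus_assoc x y z)) Rplus_comm Rplus_0_l.

Lemma big_Rmult_distr_l (T : Type) (s : seq T) (a : R) (G : T -> R) :
  a * \big[Rplus/R0]_(x <- s) G x = \big[Rplus/R0]_(x <- s) (a * G x).
Proof.
by apply: (big_endo (fun x => a * x)) => [x y|]; rewrite ?Rmult_plus_distr_l ?Rmult_0_r.
Qed.

Lemma is_derive_big (T : Type) (r : seq T) (G : T -> R -> R) (D : T -> R) t0 :
  (forall i, is_derive (G i) t0 (D i)) ->
  is_derive (fun t => \big[Rplus/R0]_(i <- r) G i t) t0 (\big[Rplus/R0]_(i <- r) D i).
Proof.
move=> HG; elim: r => [|a r IH].
  by rewrite big_nil; apply: is_derive_ext (is_derive_const R0 t0) => t; rewrite big_nil.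
rewrite big_cons; apply: is_derive_ext (is_derive_plus _ _ _ _ _ (HG a) IH) => t.
by rewrite big_cons.
Qed.

Lemma telescope_ord (G : nat -> R) n :
  \big[Rplus/R0]_(i < n) (G i.+1 - G i) = G n - G O.
Proof. by elim: n => [|n IH]; rewrite ?big_ord0 ?big_ord_recr /= ?IH; lra. Qed.

Lemma big_restrict_uniq (T : eqType) (U s : seq T) (G : T -> R) :
  uniq U -> uniq s -> {subset s <= U} -> (forall x, x \notin s -> G x = 0) ->
  \big[Rplus/R0]_(x <- U) G x = \big[Rplus/R0]_(x <- s) G x.
Proof.
move=> uU us sU G0; rewrite (bigID (mem s)) /= [X in _ + X]big1 // Rplus_0_r.
rewrite -big_filter; apply/perm_big/uniq_perm => [||x]; rewrite ?filter_uniq //.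
by rewrite mem_filter andb_idr //; apply: sU.
Qed.

Lemma filter_forall_fin (T : finType) (U : Type) (Fl : (U -> Prop) -> Prop)
    (FF : Filter Fl) (P : T -> U -> Prop) :
  (forall j, Fl (P j)) -> Fl (fun u => forall j, P j u).
Proof.
move=> HP; have : Fl (fun u => forall j, j \in enum T -> P j u).
  elim: (enum T) => [|a s IH]; first exact: filter_forall.
  apply: filter_imp (filter_and _ _ (HP a) IH) => u [Pa Ps] j.
  by rewrite in_cons => /predU1P [->|/Ps].
by apply: filter_imp => u Hu j; apply: Hu; rewrite mem_enum.
Qed.

Lemma continuous_near (g : R -> R) t0 eps :
  continuous g t0 -> 0 < eps -> locally t0 (fun t => Rabs (g t - g t0) < eps).
Proof. by move=> /filterlim_locally Hg He; apply: (Hg (mkposreal _ He)). Qed.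

Lemma Rabs_mult_approx a b P D e :
  e <= 1 -> Rabs (a - P) < e -> Rabs (b - D) < e ->
  Rabs (a * b - P * D) < e * (Rabs P + Rabs D + 1).
Proof.
move=> e1 Ha Hb.
have -> : a * b - P * D = (a - P) * b + P * (b - D) by ring.
have Hbb : Rabs b < Rabs D + 1.
  have := Rabs_triang (b - D) D.
  rewrite (_ : b - D + D = b); [lra | ring].
apply: Rle_lt_trans (Rabs_triang _ _) _; rewrite !Rabs_mult.
have := Rabs_pos (a - P); have := Rabs_pos (b - D); have := Rabs_pos P; have := Rabs_pos b.
nra.
Qed.

(* A Caratheodory-style criterion, phrased so that the slopes (mean-value points)
   need not be chosen as a function of [t]. *)
Lemma is_derive_factor (phi g : R -> R) t0 P D :
  is_derive g t0 D ->
  (forall eps, 0 < eps -> locally t0 (fun t =>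
     exists a, Rabs (a - P) < eps /\ phi t - phi t0 = a * (g t - g t0))) ->
  is_derive phi t0 (P * D).
Proof.
move=> /is_derive_Reals Hg Hphi; apply/is_derive_Reals => eps Heps.
have HS : 0 < Rabs P + Rabs D + 1 by have := Rabs_pos P; have := Rabs_pos D; lra.
set e := Rmin 1 (eps / (Rabs P + Rabs D + 1)).
have He : 0 < e by apply: Rmin_pos; [lra | apply: Rdiv_lt_0_compat].
have HeS : e * (Rabs P + Rabs D + 1) <= eps.
  have := Rmin_r 1 (eps / (Rabs P + Rabs D + 1)); rewrite -/e => Hr.
  apply: Rle_trans (Rmult_le_compat_r _ _ _ (Rlt_le _ _ HS) Hr) _.
  by rewrite /Rdiv Rmult_assoc Rinv_l; lra.
have [d1 Hd1] := Hg e He; have [d2 Hd2] := Hphi e He.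
exists (mkposreal _ (Rmin_pos _ _ (cond_pos d1) (cond_pos d2))) => h h0 /= hd.
have [a [Ha ->]] : exists a, Rabs (a - P) < e /\
    phi (t0 + h) - phi t0 = a * (g (t0 + h) - g t0).
  apply: Hd2; rewrite /ball /= /AbsRing_ball /abs /minus /plus /opp /=.
  have -> : t0 + h + - t0 = h by ring.
  exact: Rlt_le_trans hd (Rmin_r _ _).
have -> : a * (g (t0 + h) - g t0) / h = a * ((g (t0 + h) - g t0) / h) by field.
apply: Rlt_le_trans HeS; apply: Rabs_mult_approx (Rmin_l _ _) Ha _.
by apply: Hd1 => //; apply: Rlt_le_trans hd (Rmin_l _ _).
Qed.

Lemma Rabs_between a b c :
  Rmin a b <= c <= Rmax a b -> Rabs (c - a) <= Rabs (b - a).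
Proof.
rewrite /Rmin /Rmax; case: Rle_dec => ? [? ?]; rewrite /Rabs;
repeat case: Rcase_abs; lra.
Qed.

Section ChainRule.
Variables (k : nat) (f : ('I_k -> R) -> R).
Hypothesis f_partial : forall i p, ex_derive (fun t => f (upd_pt p i t)) (p i).
Hypothesis f_partial_cont : forall i, contk (pderiv f i).

Lemma upd_pt_upd_pt (p : 'I_k -> R) i t s : upd_pt (upd_pt p i t) i s = upd_pt p i s.
Proof. by apply: functional_extensionality => j; rewrite /upd_pt; case: eqP. Qed.

Lemma upd_pt_at (p : 'I_k -> R) i t : upd_pt p i t i = t.
Proof. by rewrite /upd_pt eqxx. Qed.

Lemma is_derive_partial (q : 'I_k -> R) i s :
  is_derive (fun u => f (upd_pt q i u)) s (pderiv f i (upd_pt q i s)).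
Proof.
have E u : f (upd_pt (upd_pt q i s) i u) = f (upd_pt q i u) by rewrite upd_pt_upd_pt.
have := f_partial i (upd_pt q i s); rewrite /pderiv !upd_pt_at (Derive_ext _ _ _ E).
by move=> /(ex_derive_ext _ _ _ E) /Derive_correct.
Qed.

Lemma partial_mvt (q : 'I_k -> R) i a b : exists c, Rmin a b <= c <= Rmax a b /\
  f (upd_pt q i b) - f (upd_pt q i a) = pderiv f i (upd_pt q i c) * (b - a).
Proof.
apply: (MVT_gen (fun s => f (upd_pt q i s))) => [x _|x _]; first exact: is_derive_partial.
by apply/continuity_pt_filterlim/ex_derive_continuous; eexists; apply: is_derive_partial.
Qed.

Variables (g : 'I_k -> R -> R) (t0 : R).
Hypothesis g_derive : forall j, ex_derive (g j) t0.

Definition hybrid (m : nat) t : 'I_k -> R :=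
  fun j => if (j < m)%N then g j t else g j t0.

Lemma hybrid_succ (m : 'I_k) t : hybrid m.+1 t = upd_pt (hybrid m t) m (g m t).
Proof.
apply: functional_extensionality => j; rewrite /hybrid /upd_pt ltnS leq_eqVlt.
by case: (eqVneq j m) => [->|ne]; rewrite ?eqxx // val_eqE (negbTE ne).
Qed.

Lemma hybrid_at (m : 'I_k) t : hybrid m t = upd_pt (hybrid m t) m (g m t0).
Proof.
apply: functional_extensionality => j; rewrite /hybrid /upd_pt.
by case: (eqVneq j m) => [->|//]; rewrite ltnn.
Qed.

Lemma hybrid_t0 m : hybrid m t0 = fun j => g j t0.
Proof. by apply: functional_extensionality => j; rewrite /hybrid; case: ifP. Qed.

Lemma hybrid_k t : hybrid k t = fun j => g j t.
Proof. by apply: functional_extensionality => j; rewrite /hybrid ltn_ord. Qed.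

Lemma is_derive_hybrid_step (m : 'I_k) :
  is_derive (fun t => f (hybrid m.+1 t) - f (hybrid m t)) t0
    (pderiv f m (fun j => g j t0) * Derive (g m) t0).
Proof.
apply: is_derive_factor => [|eps Heps]; first exact: Derive_correct.
have [d [Hd Hpd]] := f_partial_cont m (fun j => g j t0) Heps.
have near_g : forall j, locally t0 (fun t => Rabs (g j t - g j t0) < d).
  by move=> j; apply: continuous_near Hd; apply: ex_derive_continuous.
apply: filter_imp (filter_forall_fin _ near_g) => t Hgt.
have [c [Hc Ec]] := partial_mvt (hybrid m t) m (g m t0) (g m t).
exists (pderiv f m (upd_pt (hybrid m t) m c)); split.
  apply: Hpd => j; rewrite /upd_pt; case: eqP => [->|_].
    exact: Rle_lt_trans (Rabs_between Hc) (Hgt m).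
  by rewrite /hybrid; case: ifP; rewrite ?Rminus_eq_0 ?Rabs_R0.
by rewrite !hybrid_t0 Rminus_eq_0 Rminus_0_r hybrid_succ {2}hybrid_at.
Qed.

Lemma chain_rule_partials :
  is_derive (fun t => f (fun j => g j t)) t0
    (\big[Rplus/R0]_(i < k) (pderiv f i (fun j => g j t0) * Derive (g i) t0)).
Proof.
have E t : f (fun j => g j t) =
    f (fun j => g j t0) + \big[Rplus/R0]_(i < k) (f (hybrid i.+1 t) - f (hybrid i t)).
  rewrite (telescope_ord (fun m => f (hybrid m t))) hybrid_k.
  by change (hybrid 0 t) with (fun j => g j t0); lra.
apply: is_derive_ext (fun t => esym (E t)) _.
rewrite -[X in is_derive _ _ X]Rplus_0_l; apply: is_derive_plus.
  exact: is_derive_const.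
exact: is_derive_big is_derive_hybrid_step.
Qed.

End ChainRule.

Lemma chain_rule_Cn1 k (f : ('I_k -> R) -> R) (g : 'I_k -> R -> R) t0 :
  Cn 1 f -> (forall j, ex_derive (g j) t0) ->
  is_derive (fun t => f (fun j => g j t)) t0
    (\big[Rplus/R0]_(i < k) (pderiv f i (fun j => g j t0) * Derive (g i) t0)).
Proof. by move=> [_ Hf]; apply: chain_rule_partials => i; case: (Hf i) => [? []]. Qed.

Section Semantics.
Variables (B : eqType) (F : Type) (ar : F -> nat).
Variable I : forall f : F, ('I_(ar f) -> R) -> R.
Hypothesis I_C1 : forall f, Cn 1 (@I f).

Lemma upd_id (w : tvar B -> R) x : upd w x (w x) = w.
Proof. by apply: functional_extensionality => z; rewrite /upd; case: eqP => [->|]. Qed.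

Lemma eval_upd_notin (e : term B ar) w x t : dfree e -> x \notin vars e ->
  eval I (upd w x t) e = eval I w e.
Proof.
elim: e w => [z|c|e1 IH1 e2 IH2|e1 IH1 e2 IH2|f a IH|//] w /=.
- by move=> _; rewrite inE /upd eq_sym => /negbTE ->.
- by [].
- by move=> [d1 d2]; rewrite mem_cat negb_or => /andP [n1 n2]; rewrite IH1 // IH2.
- by move=> [d1 d2]; rewrite mem_cat negb_or => /andP [n1 n2]; rewrite IH1 // IH2.
- move=> d nx; congr (I _); apply: functional_extensionality => i.
  apply: IH => //; apply: contra nx => xi; apply/flattenP.
  by exists (vars (a i)) => //; apply: map_f; rewrite mem_enum.
Qed.

Lemma ex_derive_eval_upd (e : term B ar) w x t : dfree e ->
  ex_derive (fun s => eval I (upd w x s) e) t.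
Proof.
elim: e => [z|c|e1 IH1 e2 IH2|e1 IH1 e2 IH2|f a IH|//] /=.
- by move=> _; rewrite /upd; case: eqP => _; [apply: ex_derive_id | apply: ex_derive_const].
- by move=> _; apply: ex_derive_const.
- by move=> [d1 d2]; apply: ex_derive_plus (IH1 d1) (IH2 d2).
- by move=> [d1 d2]; apply: ex_derive_mult (IH1 d1) (IH2 d2).
- by move=> d; eexists; apply: chain_rule_Cn1 (I_C1 f) _ => j; apply: IH.
Qed.

Lemma Derive_eval_app (f : F) (a : 'I_(ar f) -> term B ar) w x :
  (forall j, dfree (a j)) ->
  Derive (fun t => eval I (upd w x t) (TApp f a)) (w x) =
  \big[Rplus/R0]_(i < ar f) (pderiv (@I f) i (fun j => eval I w (a j)) *
                             Derive (fun t => eval I (upd w x t) (a i)) (w x)).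
Proof.
move=> da; apply: is_derive_unique.
have := chain_rule_Cn1 (I_C1 f) (fun j => ex_derive_eval_upd w x (w x) (da j)).
by rewrite upd_id.
Qed.

Lemma eval_subst (e : term B ar) s w : dfree e ->
  eval I w (subst s e) = eval I (fun x => eval I w (s x)) e.
Proof.
elim: e => [z|c|e1 IH1 e2 IH2|e1 IH1 e2 IH2|f a IH|//] //=.
- by move=> [d1 d2]; rewrite IH1 // IH2.
- by move=> [d1 d2]; rewrite IH1 // IH2.
- by move=> d; congr (I _); apply: functional_extensionality => i; apply: IH.
Qed.

Lemma eval_subst_map k (y : 'I_k -> tvar B) (es : 'I_k -> term B ar) w :
  injective y -> (fun j => eval I w (subst_map y es (y j))) = (fun j => eval I w (es j)).
Proof.
move=> y_inj; apply: functional_extensionality => j.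
rewrite /subst_map; case: pickP => [j' /eqP /y_inj -> //|].
by move/(_ j); rewrite eqxx.
Qed.

Lemma eval_tsum (T : Type) (s : seq T) (G : T -> term B ar) w :
  eval I w (tsum [seq G i | i <- s]) = \big[Rplus/R0]_(i <- s) eval I w (G i).
Proof.
elim: s => [|a s IH] /=; first by rewrite big_nil /Q2R /= Rmult_0_l.
by rewrite big_cons IH.
Qed.

Lemma eval_TDiff (e : term B ar) w :
  eval I w (TDiff e) = \big[Rplus/R0]_(x <- undup (vars e))
    (w (Defs.prime x) * Derive (fun t => eval I (upd w x t) e) (w x)).
Proof. by rewrite /=; elim: (undup _) => [|x s /= ->]; rewrite ?big_nil ?big_cons. Qed.

Lemma eval_TDiff_over (e : term B ar) w (U : seq (tvar B)) :
  dfree e -> uniq U -> {subset vars e <= U} ->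
  eval I w (TDiff e) = \big[Rplus/R0]_(x <- U)
    (w (Defs.prime x) * Derive (fun t => eval I (upd w x t) e) (w x)).
Proof.
move=> de uU sU; rewrite eval_TDiff; symmetry; apply: big_restrict_uniq => //.
- exact: undup_uniq.
- by move=> x; rewrite mem_undup; apply: sU.
- move=> x; rewrite mem_undup => nx.
  rewrite (Derive_ext _ (fun _ => eval I w e)) => [|t]; last exact: eval_upd_notin.
  by rewrite Derive_const Rmult_0_r.
Qed.

End Semantics.

Unset Implicit Arguments.

Theorem lemma2p5
  (B : eqType) (F : Type) (ar : F -> nat)
  (I : forall f : F, ('I_(ar f) -> R) -> R)
  (HI : forall f, smooth (I f))
  (h : F)
  (y : 'I_(ar h) -> tvar B) (Hy : injective y)
  (dh : 'I_(ar h) -> term B ar)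
  (Hdh_df : forall i, dfree (dh i))
  (Hdh_fv : forall i x, x \in vars (dh i) -> exists j, y j = x)
  (Hdh : forall i (w : tvar B -> R),
      eval I w (dh i) = pderiv (I h) i (fun j => w (y j)))
  (es : 'I_(ar h) -> term B ar)
  (Hes : forall j, dfree (es j)) :
  valid I (TDiff (TApp h es))
          (tsum [seq TMult (subst (subst_map y es) (dh i)) (TDiff (es i))
                | i <- enum 'I_(ar h)]).
Proof.
move=> w; have I_C1 f : Cn 1 (I f) := HI f 1%nat.
rewrite eval_TDiff eval_tsum big_enum.
under eq_bigr => x _ do rewrite Derive_eval_app // big_Rmult_distr_l.
rewrite exchange_big; apply: eq_bigr => i _.
change (eval I w (TMult ?a ?b)) with (eval I w a * eval I w b).
rewrite eval_subst // Hdh eval_subst_map //.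
rewrite (eval_TDiff_over _ _ (Hes i) (undup_uniq (vars (TApp h es)))).
  by rewrite big_Rmult_distr_l; apply: eq_bigr => x _; ring.
move=> x xi; rewrite mem_undup; apply/flattenP.
by exists (vars (es i)) => //; apply: map_f; rewrite mem_enum.
Qed.
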